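(* Let $X_1,\dots,X_n,R_1,\dots,R_n$ be mutually independent random variables, all real-valued or all taking values in $\mathbb{Z}_p$ (addition mod $p$), such that $\mathrm{I}(X_i;X_i+R_i)=0$ for every $i$. Then for every $i$, $$\mathrm{I}\Big(X_i;\ X_1+R_1,\dots,X_n+R_n,\ \textstyle\sum_{j=1}^n R_j\Big)=\mathrm{I}\Big(X_i;\ \textstyle\sum_{j=1}^n X_j\Big).$$
   Context: $\mathrm{I}$ denotes mutual information. *)

From HB Require Import structures.
From mathcomp Require Import all_boot all_order all_algebra.
From mathcomp Require Import all_classical all_reals all_analysis.
Set Implicit Arguments. Unset Strict Implicit. Unset Printing Implicit Defensive.
Import Order.TTheory GRing.Theory Num.Theory.
Local Open Scope classical_set_scope.
Local Open Scope ring_scope.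

(* Random variables with values in a type V carrying a sigma-algebra mV
   (Borel sets for R, all subsets for Z_p).  *)

Definition sigmaRV {T V : Type} (mV : set (set V)) (X : T -> V) : set (set T) :=
  [set X @^-1` B | B in mV].

(* sigma-algebra generated by a family of random variables (the joint variable) *)
Definition sigmaFam {T V I : Type} (mV : set (set V)) (Z : I -> T -> V) : set (set T) :=
  <<s \bigcup_(i in [set: I]) sigmaRV mV (Z i) >>.

Definition rv_meas {d} {T : measurableType d} {V : Type} (mV : set (set V))
  (X : T -> V) : Prop := forall B, mV B -> measurable (X @^-1` B).

Definition mutually_indep {d} {T : measurableType d} {R : realType}
  (P : probability T R) {V : Type} (mV : set (set V)) {I : finType}
  (Z : I -> T -> V) : Prop :=
  forall (J : {set I}) (B : I -> set V), (forall i, mV (B i)) ->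
    fine (P (\bigcap_(i in [set i | i \in J]) (Z i @^-1` B i))) =
    \prod_(i in J) fine (P (Z i @^-1` B i)).

Definition fpartition {T : Type} (F : set (set T)) (m : nat) (A : 'I_m -> set T) : Prop :=
  (forall k, F (A k)) /\ (forall k l, k != l -> A k `&` A l = set0) /\
  \bigcup_(k in [set: 'I_m]) A k = setT.

Definition mi_term {R : realType} (pab pa pb : R) : R :=
  if pab == 0 then 0 else pab * ln (pab / (pa * pb)).

(* Mutual information between two sub-sigma-algebras (Gelfand-Yaglom-Dobrushin /
   Pinsker): supremum over finite measurable partitions. *)
Definition MI {d} {T : measurableType d} {R : realType} (P : probability T R)
  (F G : set (set T)) : \bar R :=
  ereal_sup [set r : \bar R | exists (m m' : nat) (A : 'I_m -> set T) (B : 'I_m' -> set T),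
     [/\ fpartition F A, fpartition G B &
       r = (\sum_(k < m) \sum_(l < m')
         mi_term (fine (P (A k `&` B l))) (fine (P (A k))) (fine (P (B l))))%:E]].

From HB Require Import structures.
From mathcomp Require Import all_boot all_order all_algebra.
From mathcomp Require Import all_classical all_reals all_analysis.
From mathcomp Require Import lra ring.
Import Order.TTheory GRing.Theory Num.Theory.
Local Open Scope classical_set_scope.
Local Open Scope ring_scope.
Set Implicit Arguments. Unset Strict Implicit. Unset Printing Implicit Defensive.

(* Mutual information is a supremum of partition sums, so by Gibbs' inequality it
   vanishes exactly when the two sigma-algebras are independent.

   Real case: X independent of both R and X + R forces X to be almost surely
   constant.  If X had mass below a and above b > a, independence would give
   P(R >= u) <= P(X + R >= u + b) <= P(R >= u + (b - a)) for every u, which no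
   probability law allows.  Hence sigma(X_i) is trivial and both sides vanish.

   Finite abelian group case: independence gives
   P(X_j = x) P(R_j = y - x) = P(X_j = x) P(X_j + R_j = y).  Multiplying over j,
   the observation W = ((X_j + R_j)_j, sum_j R_j) satisfies
   P(X_i in E, W = (y, r)) = prod_j P(X_j + R_j = y_j) * P(X_i in E, sum_j X_j = sum_j y_j - r),
   i.e. W is sum_j X_j sent through a channel independent of X_i.  The log-sum
   inequality bounds every partition sum for W by the one for the fibres of
   sum_j X_j, and sigma(sum_j X_j) is contained in sigma(W). *)

Section Probability.
Context {R : realType} {d : measure_display} {T : measurableType d}
  (P : probability T R).

Definition pr (A : set T) : R := fine (P A).

Lemma prE A : measurable A -> P A = (pr A)%:E.
Proof. by move=> mA; rewrite /pr fineK // (@fin_num_measure _ _ _ P A mA). Qed.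

Lemma pr_ge0 A : measurable A -> 0 <= pr A.
Proof. by move=> mA; rewrite -lee_fin -prE // measure_ge0. Qed.

Lemma prT : pr setT = 1.
Proof. by rewrite /pr probability_setT. Qed.

Lemma pr0 : pr set0 = 0.
Proof. by rewrite /pr measure0. Qed.

Lemma prU A B : measurable A -> measurable B -> A `&` B = set0 ->
  pr (A `|` B) = pr A + pr B.
Proof.
move=> mA mB AB; apply/eqP; rewrite -eqe -prE; last exact: measurableU.
by rewrite measureU // EFinD -!prE.
Qed.

Lemma pr_setU_le A B : measurable A -> measurable B -> pr (A `|` B) <= pr A + pr B.
Proof.
move=> mA mB; rewrite -lee_fin EFinD -!prE //; last exact: measurableU.
exact: measureU2.
Qed.

Lemma pr_le A B : measurable A -> measurable B -> A `<=` B -> pr A <= pr B.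
Proof. by move=> mA mB AB; rewrite -lee_fin -!prE // le_measure // inE. Qed.

Lemma pr_le_eq0 A B : measurable A -> measurable B -> A `<=` B -> pr B = 0 -> pr A = 0.
Proof.
move=> mA mB AB B0; apply/eqP; rewrite eq_le pr_ge0 // andbT -B0.
exact: pr_le.
Qed.

Lemma pr_splitI A B : measurable A -> measurable B ->
  pr A = pr (A `&` B) + pr (A `&` ~` B).
Proof.
move=> mA mB; rewrite -prU; [|exact: measurableI|apply: measurableI => //; exact: measurableC|].
  by rewrite -setIUr setUv setIT.
by rewrite setIACA setICr setI0.
Qed.

Lemma prC A : measurable A -> pr (~` A) = 1 - pr A.
Proof. by move=> mA; rewrite -prT (@pr_splitI setT A measurableT mA) //= !setTI; lra. Qed.

Lemma pr_cover_null (E : set T) (F : nat -> set T) : measurable E ->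
  (forall k, measurable (F k)) -> (forall k, pr (F k) = 0) ->
  E `<=` \bigcup_k F k -> pr E = 0.
Proof.
move=> mE mF F0 sub; have := measure_sigma_subadditive P mF mE sub.
rewrite eseries0; last by move=> i _ _ /=; rewrite (prE (mF i)) F0.
rewrite /= (prE mE) lee_fin => h; apply/eqP; by rewrite eq_le h pr_ge0.
Qed.

Lemma pr_preimage_mem (U : finType) (g : T -> U) (E : set T) :
  measurable E -> (forall u, measurable (g @^-1` [set u])) ->
  forall (s : seq U), uniq s ->
  pr (E `&` g @^-1` [set u | u \in s]) = \sum_(u <- s) pr (E `&` g @^-1` [set u]).
Proof.
move=> mE mg; elim=> [|a s IH] /=.
  move=> _; rewrite big_nil.
  have -> : E `&` g @^-1` [set u | u \in [::]] = set0.
    by apply/seteqP; split=> x //= [].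
  exact: pr0.
move=> /andP[as_ us]; rewrite big_cons -IH //.
have -> : E `&` g @^-1` [set u | u \in a :: s] =
  (E `&` g @^-1` [set a]) `|` (E `&` g @^-1` [set u | u \in s]).
  apply/seteqP; split=> x /=.
    by move=> [Ex]; rewrite inE => /orP[/eqP ->|xs]; [left|right].
  by move=> [[Ex ->]|[Ex xs]]; split=> //; rewrite inE ?eqxx ?xs ?orbT.
have mfs : measurable (g @^-1` [set u | u \in s]).
  have -> : g @^-1` [set u | u \in s] = \bigcup_(u in [set u | u \in s]) g @^-1` [set u].
    by apply/seteqP; split=> x /=; [move=> h; exists (g x)|move=> [u h ->]].
  apply: fin_bigcup_measurable => // ; exact: finite_finset.
apply: prU; [exact: measurableI|exact: measurableI|].
apply/seteqP; split=> x //= [[_ ->]] [_]; by rewrite (negbTE as_).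
Qed.

Lemma pr_preimage_pred (U : finType) (g : T -> U) (E : set T) (C : pred U) :
  measurable E -> (forall u, measurable (g @^-1` [set u])) ->
  pr (E `&` g @^-1` [set u | C u]) = \sum_(u | C u) pr (E `&` g @^-1` [set u]).
Proof.
move=> mE mg; rewrite -big_filter -(pr_preimage_mem mE mg); last first.
  by rewrite filter_uniq // index_enum_uniq.
congr pr; apply/seteqP; split=> x /= [Ex h]; split=> //.
  by rewrite mem_filter h mem_index_enum.
by move: h; rewrite mem_filter => /andP[].
Qed.

Lemma sum_pr_fibers (U : finType) (g : T -> U) :
  (forall u, measurable (g @^-1` [set u])) ->
  \sum_u pr (g @^-1` [set u]) = 1.
Proof.
move=> mg; have := @pr_preimage_pred U g setT xpredT measurableT mg.
under eq_bigr do rewrite setTI.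
move=> <-; rewrite -prT; congr pr; apply/seteqP; split=> x //.
Qed.

End Probability.

Section Divergence.
Context {R : realType}.

Lemma ln_le_subr1 (x : R) : 0 < x -> ln x <= x - 1.
Proof. move=> x0; have := @le_ln1Dx R (x - 1); rewrite addrCA subrr addr0; apply; lra. Qed.

Lemma ln_eq_subr1 (x : R) : 0 < x -> ln x = x - 1 -> x = 1.
Proof.
move=> x0 h; set s := Num.sqrt x.
have s0 : 0 < s by rewrite sqrtr_gt0.
have xs : x = s * s by rewrite -expr2 sqr_sqrtr // ltW.
(* [x - 1 = ln x = 2 ln s <= 2 (s - 1)] for [s = sqrt x], i.e. [(s - 1)^2 <= 0] *)
have : ln x <= 2 * (s - 1).
  rewrite xs lnM ?posrE //; have := ln_le_subr1 s0; lra.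
rewrite h xs => hh.
have s1 : s = 1 by nra.
by rewrite xs s1 mulr1 in h *.
Qed.

Definition kl (a b : R) : R := if a == 0 then 0 else a * ln (a / b).

Lemma mi_termE (a q r : R) : mi_term a q r = kl a (q * r).
Proof. by []. Qed.

Lemma kl_ge_subr (a b : R) : 0 <= a -> 0 <= b -> (0 < a -> 0 < b) -> a - b <= kl a b.
Proof.
move=> a0 b0 ab; rewrite /kl; have [->|an0] := eqVneq a 0; first lra.
have ap : 0 < a by rewrite lt_def an0.
have bp := ab ap.
have -> : a / b = (b / a)^-1 by rewrite invf_div.
rewrite lnV ?posrE ?divr_gt0 //.
have := ln_le_subr1 (divr_gt0 bp ap).
rewrite -(ler_pM2l ap) mulrBr mulrCA divff ?mulr1 ?gt_eqF //; lra.
Qed.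

Lemma kl_eq_subr (a b : R) : 0 <= a -> 0 <= b -> (0 < a -> 0 < b) ->
  kl a b = a - b -> a = b.
Proof.
move=> a0 b0 ab; rewrite /kl; have [->|an0] := eqVneq a 0; first lra.
have ap : 0 < a by rewrite lt_def an0.
have bp := ab ap.
have -> : a / b = (b / a)^-1 by rewrite invf_div.
rewrite lnV ?posrE ?divr_gt0 // => h.
have e : a * ln (b / a) = a * (b / a - 1).
  rewrite mulrBr mulrCA divff ?gt_eqF // !mulr1; lra.
move: e => /(mulfI (lt0r_neq0 ap)) /ln_eq_subr1 => /(_ (divr_gt0 bp ap)) e.
by rewrite -[b](mulfVK (lt0r_neq0 ap)) e mul1r.
Qed.

Lemma gibbs_eq (I : finType) (a b : I -> R) :
  (forall i, 0 <= a i) -> (forall i, 0 <= b i) -> (forall i, 0 < a i -> 0 < b i) ->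
  \sum_i a i = 1 -> \sum_i b i = 1 -> \sum_i kl (a i) (b i) <= 0 ->
  forall i, a i = b i.
Proof.
move=> a0 b0 ab sa sb sk i.
have f0 : forall j, 0 <= kl (a j) (b j) - (a j - b j).
  by move=> j; rewrite subr_ge0; apply: kl_ge_subr; [exact: a0|exact: b0|exact: ab].
have : \sum_j (kl (a j) (b j) - (a j - b j)) = 0.
  apply/eqP; rewrite eq_le; apply/andP; split; last by apply: sumr_ge0 => j _.
  by rewrite sumrB sumrB sa sb subrr subr0.
move/psumr_eq0P => /(_ (fun j _ => f0 j) i isT) /eqP; rewrite subr_eq0 => /eqP.
by apply: kl_eq_subr; [exact: a0|exact: b0|exact: ab].
Qed.

Lemma mi_termZ (c a q b : R) : 0 <= c -> mi_term (c * a) q (c * b) = c * mi_term a q b.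
Proof.
move=> c0; rewrite /mi_term; have [->|cn0] := eqVneq c 0; first by rewrite !mul0r eqxx.
rewrite mulf_eq0 (negbTE cn0) /=; case: ifP => _; first by rewrite mulr0.
rewrite -mulrA; congr (_ * (_ * _)); congr ln.
have e : q * (c * b) = c * (q * b) by rewrite mulrCA.
by rewrite e invfM mulrACA mulfV // mul1r.
Qed.

(* [kl_ge_subr] against the rescaled weight [(A / B) * b] *)
Lemma mi_term_ge_tangent (a b q A B : R) : 0 < A -> 0 < B -> 0 < q -> 0 <= a -> a <= b ->
  a * ln (A / (q * B)) + (a - A / B * b) <= mi_term a q b.
Proof.
move=> Ap Bp qp a0 ab; set c := A / B.
have cp : 0 < c by apply: divr_gt0.
rewrite mi_termE; have [a_eq0|a_neq0] := eqVneq a 0.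
  rewrite /kl a_eq0 eqxx mul0r add0r sub0r oppr_le0.
  by apply: mulr_ge0; [exact: ltW|rewrite -a_eq0].
have ap : 0 < a by rewrite lt_def a_neq0 a0.
have bp : 0 < b by apply: lt_le_trans ab.
have := @kl_ge_subr a (c * b) (ltW ap) (ltW (mulr_gt0 cp bp)) (fun _ => mulr_gt0 cp bp).
rewrite /kl (negbTE a_neq0).
have -> : a / (c * b) = (a / (q * b)) / (A / (q * B)).
  rewrite /c; field; rewrite ?lt0r_neq0 //;
    by apply/andP; split; apply/andP; split; apply: lt0r_neq0.
rewrite ln_div ?posrE; first (rewrite mulrBr; lra).
  by apply: divr_gt0 => //; apply: mulr_gt0.
by apply: divr_gt0 => //; apply: mulr_gt0.
Qed.

Lemma log_sum_inequality (I : finType) (Pr : pred I) (a b : I -> R) (q : R) :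
  (forall i, 0 <= a i) -> (forall i, a i <= b i) -> (forall i, a i <= q) ->
  mi_term (\sum_(i | Pr i) a i) q (\sum_(i | Pr i) b i) <=
  \sum_(i | Pr i) mi_term (a i) q (b i).
Proof.
move=> a0 ab aq; set A := \sum_(i | Pr i) a i; set B := \sum_(i | Pr i) b i.
have [A_eq0|A_neq0] := eqVneq A 0.
  have ai0 i : Pr i -> a i = 0 by apply: psumr_eq0P => // j _.
  rewrite /mi_term A_eq0 eqxx big1 // => i Pi; by rewrite ai0 // eqxx.
have Ap : 0 < A by rewrite lt_def A_neq0 sumr_ge0.
have Bp : 0 < B by apply: lt_le_trans Ap _; apply: ler_sum => i _.
have [i _ ai] : exists2 i, Pr i & 0 < a i.
  have /eqP A_neq0' := A_neq0.
  have := psumr_neq0P (fun i _ => a0 i) A_neq0' => -[i /andP[]]; by exists i.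
have qp : 0 < q by apply: lt_le_trans (aq i).
have := @ler_sum _ _ (index_enum I) Pr _ _
  (fun j _ => mi_term_ge_tangent Ap Bp qp (a0 j) (ab j)).
rewrite big_split /= -mulr_suml big_split /= -/A sumrN -mulr_sumr -/B.
by rewrite mulfVK ?lt0r_neq0 // subrr addr0 /mi_term (negbTE A_neq0).
Qed.

End Divergence.

Lemma sum_over_preimage_partition {T : Type} {V : nmodType} (U : finType) (f : T -> U)
    m (B : 'I_m -> set T) (C : 'I_m -> set U) (g : U -> V) :
  (forall l, B l = f @^-1` C l) ->
  (forall k l, k != l -> B k `&` B l = set0) ->
  \bigcup_(k in [set: 'I_m]) B k = [set: T] ->
  (forall u, ~ range f u -> g u = 0) ->
  \sum_l \sum_(u | `[< C l u >]) g u = \sum_u g u.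
Proof.
move=> hB hdis hcov g0.
under eq_bigr do rewrite big_mkcond.
rewrite exchange_big; apply: eq_bigr => u _.
have [[t _ ft]|nt] := pselect (range f u); last first.
  by rewrite g0 // big1 // => l _; case: ifP.
have : (\bigcup_(k in [set: 'I_m]) B k) t by rewrite hcov.
move=> [l0 _ hl0].
have Cl0 : C l0 u by move: hl0; rewrite hB /= ft.
rewrite (bigD1 l0) //= big1 ?addr0; first by case: asboolP.
move=> l nl; case: asboolP => // hC.
have : (B l `&` B l0) t by split; rewrite hB /= ft.
by rewrite hdis.
Qed.

Section MutualInformation.
Context {R : realType} {d : measure_display} {T : measurableType d}
  (P : probability T R).

Local Notation pr := (pr P).

Definition partition_mi (m m' : nat) (A : 'I_m -> set T) (B : 'I_m' -> set T) : R :=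
  \sum_(k < m) \sum_(l < m') mi_term (pr (A k `&` B l)) (pr (A k)) (pr (B l)).

Lemma partition_mi_le_MI (F G : set (set T)) m m' (A : 'I_m -> set T) (B : 'I_m' -> set T) :
  fpartition F A -> fpartition G B -> ((partition_mi A B)%:E <= MI P F G)%E.
Proof. by move=> hA hB; apply: ereal_sup_ubound; exists m, m', A, B. Qed.

Lemma MI_le_partition_bound (F G : set (set T)) (x : R) :
  (forall m m' (A : 'I_m -> set T) (B : 'I_m' -> set T),
     fpartition F A -> fpartition G B -> partition_mi A B <= x) ->
  (MI P F G <= x%:E)%E.
Proof.
move=> h; apply: ge_ereal_sup => r [m [m' [A [B [hA hB ->]]]]].
by rewrite lee_fin; exact: h.
Qed.

Lemma le_MI (F G1 G2 : set (set T)) : G1 `<=` G2 -> (MI P F G1 <= MI P F G2)%E.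
Proof.
move=> sub; apply: ereal_sup_le => r [m [m' [A [B [hA [hB1 hB2] ->]]]]].
by exists m, m', A, B; split => //; split => // l; apply: sub.
Qed.

Definition bipartition (A : set T) (k : 'I_2) : set T := if val k == 0%N then A else ~` A.

Lemma fpartition_bipartition (F : set (set T)) A :
  F A -> F (~` A) -> fpartition F (bipartition A).
Proof.
move=> FA FCA; split; [|split].
- by move=> k; rewrite /bipartition; case: ifP.
- move=> k l; case: k => -[|[|//]] ?; case: l => -[|[|//]] ? //= _.
    by rewrite /bipartition /= setICr.
  by rewrite /bipartition /= setICl.
- apply/seteqP; split=> x // _.
  have [Ax|nAx] := pselect (A x); first by exists ord0.
  by exists (lift ord0 ord0).
Qed.

Lemma fpartition_setT (F : set (set T)) : F setT -> fpartition F (fun _ : 'I_1 => setT).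
Proof.
move=> FT; split; [by []|split].
- by move=> k l; rewrite (ord1 k) (ord1 l) eqxx.
- by apply/seteqP; split=> x // _; exists ord0.
Qed.

(* Gibbs' inequality applied to the two bipartitions {A, ~A} and {C, ~C} *)
Lemma MI_eq0_indep (F G : set (set T)) A C : MI P F G = 0%E ->
  (forall S, F S -> measurable S) -> (forall S, G S -> measurable S) ->
  F A -> F (~` A) -> G C -> G (~` C) ->
  pr (A `&` C) = pr A * pr C.
Proof.
move=> h0 mF mG FA FCA GC GCC.
have := partition_mi_le_MI (fpartition_bipartition FA FCA) (fpartition_bipartition GC GCC).
rewrite h0 lee_fin => hs.
have mA := mF _ FA; have mC := mG _ GC.
have mCA := mF _ FCA; have mCC := mG _ GCC.
have mbiA k : measurable (bipartition A k) by rewrite /bipartition; case: ifP.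
have mbiC k : measurable (bipartition C k) by rewrite /bipartition; case: ifP.
pose a (p : 'I_2 * 'I_2) := pr (bipartition A p.1 `&` bipartition C p.2).
pose b (p : 'I_2 * 'I_2) := pr (bipartition A p.1) * pr (bipartition C p.2).
have := @gibbs_eq R _ a b.
have -> : (\sum_i kl (a i) (b i)) = partition_mi (bipartition A) (bipartition C).
  by rewrite /partition_mi pair_bigA.
move=> /(_ _ _ _ _ _ hs (ord0, ord0)); apply.
- by move=> q; apply: pr_ge0; apply: measurableI.
- by move=> q; apply: mulr_ge0; apply: pr_ge0.
- move=> q aq; apply: mulr_gt0.
    apply: lt_le_trans aq _; apply: pr_le; [exact: measurableI|exact: mbiA|exact: subIsetl].
  apply: lt_le_trans aq _; apply: pr_le; [exact: measurableI|exact: mbiC|exact: subIsetr].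
- have -> : \sum_i a i = \sum_k \sum_l a (k, l) by rewrite pair_bigA.
  rewrite !big_ord_recl !big_ord0 /= /a /bipartition /= !addr0.
  rewrite -(pr_splitI P mA mC) -(pr_splitI P mCA mC) prC //; lra.
- have -> : \sum_i b i = \sum_k \sum_l b (k, l) by rewrite pair_bigA.
  rewrite !big_ord_recl !big_ord0 /= /b /bipartition /= !addr0.
  rewrite !prC //; lra.
Qed.

Lemma MI_trivial_eq0 (F G : set (set T)) :
  (forall S, F S -> measurable S /\ (pr S = 0 \/ pr S = 1)) ->
  (forall S, G S -> measurable S) -> F setT -> G setT ->
  MI P F G = 0%E.
Proof.
move=> hF mG FT GT; apply/eqP; rewrite eq_le; apply/andP; split.
  apply: MI_le_partition_bound => m m' A B hA hB.
  rewrite /partition_mi big1 // => k _; rewrite big1 // => l _.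
  have [mAk [pA|pA]] := hF _ (hA.1 k); have mBl := mG _ (hB.1 l).
    have e : pr (A k `&` B l) = 0.
      by apply: (pr_le_eq0 _ _ _ pA); [exact: measurableI|exact: mAk|exact: subIsetl].
    by rewrite /mi_term e eqxx.
  have e : pr (A k `&` B l) = pr (B l).
    rewrite (pr_splitI P mBl mAk) setIC.
    have mBCA : measurable (B l `&` ~` A k) by apply: measurableI => //; exact: measurableC.
    have -> : pr (B l `&` ~` A k) = 0.
      apply: (pr_le_eq0 mBCA (measurableC mAk)); first exact: subIsetr.
      by rewrite prC // pA subrr.
    by rewrite addr0.
  rewrite /mi_term e pA mul1r; case: ifP => // /negbT hb.
  by rewrite divff // ln1 mulr0.
have := partition_mi_le_MI (fpartition_setT FT) (fpartition_setT GT).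
by rewrite /partition_mi !big_ord1 setTI prT /mi_term oner_eq0 mulr1 divr1 ln1 mulr0.
Qed.

Lemma partition_mi_le_fibers (U : finType) (f : T -> U) (E : set T) m (B : 'I_m -> set T) :
  measurable E -> (forall u, measurable (f @^-1` [set u])) ->
  fpartition (sigmaRV [set: set U] f) B ->
  \sum_(l < m) mi_term (pr (E `&` B l)) (pr E) (pr (B l)) <=
  \sum_u mi_term (pr (E `&` f @^-1` [set u])) (pr E) (pr (f @^-1` [set u])).
Proof.
move=> mE mf [hB [hdis hcov]].
have hB' l : exists C', B l = f @^-1` C' by have [C' _ <-] := hB l; exists C'.
have [C hC] := choice hB'.
pose a u := pr (E `&` f @^-1` [set u]).
pose b u := pr (f @^-1` [set u]).
have fibersC l : f @^-1` C l = f @^-1` [set u | `[< C l u >]].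
  by apply/seteqP; split=> t /=; rewrite asboolE.
have ea l : pr (E `&` B l) = \sum_(u | `[< C l u >]) a u.
  by rewrite hC fibersC (pr_preimage_pred _ _ mE mf).
have eb l : pr (B l) = \sum_(u | `[< C l u >]) b u.
  rewrite hC fibersC -[f @^-1` _]setTI (pr_preimage_pred _ _ measurableT mf).
  by apply: eq_bigr => u _; rewrite setTI.
apply: (@le_trans _ _ (\sum_(l < m) \sum_(u | `[< C l u >]) mi_term (a u) (pr E) (b u))).
  apply: ler_sum => l _; rewrite ea eb; apply: log_sum_inequality.
  - by move=> u; apply: pr_ge0; exact: measurableI.
  - by move=> u; apply: pr_le; [exact: measurableI|exact: mf|exact: subIsetr].
  - by move=> u; apply: pr_le; [exact: measurableI|exact: mE|exact: subIsetl].
rewrite (sum_over_preimage_partition hC hdis hcov) // => u nu.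
have -> : a u = 0.
  rewrite /a -(pr0 P); congr pr.
  by apply/seteqP; split=> t //= [_ ft]; apply: nu; exists t.
by rewrite /mi_term eqxx.
Qed.

End MutualInformation.

Section RealLine.
Context {R : realType}.

Lemma measurable_le_ray (a : R) : measurable [set r : R | r <= a].
Proof.
have -> : [set r : R | r <= a] = `]-oo, a]%classic.
  by apply/seteqP; split=> r /=; rewrite in_itv.
exact: measurable_itv.
Qed.

Lemma measurable_ge_ray (a : R) : measurable [set r : R | a <= r].
Proof.
have -> : [set r : R | a <= r] = `[a, +oo[%classic.
  by apply/seteqP; split=> r /=; rewrite in_itv /= andbT.
exact: measurable_itv.
Qed.

Lemma measurable_gt_ray (a : R) : measurable [set r : R | a < r].
Proof.
have -> : [set r : R | a < r] = `]a, +oo[%classic.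
  by apply/seteqP; split=> r /=; rewrite in_itv /= andbT.
exact: measurable_itv.
Qed.

Lemma measurable_lt_ray (a : R) : measurable [set r : R | r < a].
Proof.
have -> : [set r : R | r < a] = `]-oo, a[%classic.
  by apply/seteqP; split=> r /=; rewrite in_itv.
exact: measurable_itv.
Qed.

Lemma exists_nat_gt (x : R) : exists k : nat, x < k%:R.
Proof.
case: (leP 0 x) => x0; first by exists (Num.Def.archi_bound x); apply: archi_boundP.
by exists 0%N.
Qed.

Lemma exists_invS_lt (e : R) : 0 < e -> exists k : nat, (k.+1%:R)^-1 < e.
Proof.
move=> e0; have [k hk] := exists_nat_gt e^-1; exists k.
rewrite invf_plt ?posrE //; apply: lt_trans hk _; rewrite ltr_nat; exact: ltnSn.
Qed.

End RealLine.

Section AlmostSurelyConstant.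
Context {R : realType} {d : measure_display} {T : measurableType d}
  (P : probability T R).

Local Notation pr := (pr P).

(* A nonincreasing tail that does not decrease over steps of length [dd] puts no mass
   on any strip [u <= r < u + dd]; these strips cover the line. *)
Lemma tail_shift_not_nondecreasing (Y : T -> R) (dd : R) :
  rv_meas (@measurable _ R) Y -> 0 < dd ->
  ~ (forall u, pr (Y @^-1` [set r | u <= r]) <= pr (Y @^-1` [set r | u + dd <= r])).
Proof.
move=> mY dd0 tail_le.
pose strip u := Y @^-1` [set r | u <= r] `&` ~` Y @^-1` [set r | u + dd <= r].
have mstrip u : measurable (strip u).
  apply: measurableI; first exact: mY (measurable_ge_ray _).
  by apply: measurableC; exact: mY (measurable_ge_ray _).
have strip0 u : pr (strip u) = 0.
  have := pr_splitI P (mY _ (measurable_ge_ray u)) (mY _ (measurable_ge_ray (u + dd))).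
  have -> : Y @^-1` [set r | u <= r] `&` Y @^-1` [set r | u + dd <= r] =
            Y @^-1` [set r | u + dd <= r].
    by apply/seteqP; split=> x /=; [case|move=> h; split => //; lra].
  rewrite -/(strip u) => e.
  have := tail_le u; have := pr_ge0 P (mstrip u); lra.
have : pr setT = 0.
  apply: (@pr_cover_null _ _ _ P _ (fun k : nat => strip (k%:R * dd) `|` strip (- (k.+1%:R) * dd))).
  - exact: measurableT.
  - by move=> k; apply: measurableU.
  - move=> k; apply/eqP; rewrite eq_le pr_ge0 ?andbT; last exact: measurableU.
    by have := pr_setU_le P (mstrip (k%:R * dd)) (mstrip (- (k.+1%:R) * dd)); rewrite !strip0 addr0.
  - move=> x _.
    have := floor_itv (Y x / dd); case: (Num.floor (Y x / dd)) => k.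
      rewrite intrD -!pmulrn => /andP[h1 h2].
      rewrite ler_pdivlMr // in h1; rewrite ltr_pdivrMr // in h2.
      by exists k => //; left; rewrite /strip /=; split => //; nra.
    rewrite intrD NegzE intrN -!pmulrn => /andP[h1 h2].
    rewrite ler_pdivlMr // in h1; rewrite ltr_pdivrMr // in h2.
    rewrite -natr1 in h1 h2.
    by exists k => //; right; rewrite /strip /=; split => //; nra.
by rewrite prT; apply/eqP; rewrite oner_eq0.
Qed.

(* If [X] had mass below [a] and above [b], shifting [R] by [b - a] could only raise its tail. *)
Lemma indep_shift_tail_dichotomy (X Rn : T -> R) (a b : R) :
  rv_meas (@measurable _ R) X -> rv_meas (@measurable _ R) Rn ->
  rv_meas (@measurable _ R) (fun w => X w + Rn w) ->
  (forall B C, measurable B -> measurable C ->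
    pr (X @^-1` B `&` Rn @^-1` C) = pr (X @^-1` B) * pr (Rn @^-1` C)) ->
  (forall B C, measurable B -> measurable C ->
    pr (X @^-1` B `&` (fun w => X w + Rn w) @^-1` C) =
    pr (X @^-1` B) * pr ((fun w => X w + Rn w) @^-1` C)) ->
  a < b ->
  pr (X @^-1` [set r | r <= a]) = 0 \/ pr (X @^-1` [set r | b < r]) = 0.
Proof.
move=> mX mR mY iXR iXY ab.
have mXa := mX _ (measurable_le_ray a); have mXb := mX _ (measurable_gt_ray b).
have [hA|hA] := eqVneq (pr (X @^-1` [set r | r <= a])) 0; first by left.
have [hB|hB] := eqVneq (pr (X @^-1` [set r | b < r])) 0; first by right.
have pA : 0 < pr (X @^-1` [set r | r <= a]) by rewrite lt_def hA pr_ge0.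
have pB : 0 < pr (X @^-1` [set r | b < r]) by rewrite lt_def hB pr_ge0.
exfalso; apply: (tail_shift_not_nondecreasing mR (_ : 0 < b - a)) => [|u].
  by rewrite subr_gt0.
pose Y := fun w => X w + Rn w.
have h1 : pr (X @^-1` [set r | b < r]) * pr (Rn @^-1` [set r | u <= r]) <=
          pr (X @^-1` [set r | b < r]) * pr (Y @^-1` [set r | u + b <= r]).
  rewrite -(iXR _ _ (measurable_gt_ray b) (measurable_ge_ray u)).
  rewrite -(iXY _ _ (measurable_gt_ray b) (measurable_ge_ray (u + b))).
  apply: pr_le; [apply: measurableI => //; exact: mR (measurable_ge_ray _)|
                 apply: measurableI => //; exact: mY (measurable_ge_ray _)|].
  by move=> x /= [hx hr]; split => //; rewrite /Y; lra.
have h2 : pr (X @^-1` [set r | r <= a]) * pr (Y @^-1` [set r | u + b <= r]) <=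
          pr (X @^-1` [set r | r <= a]) * pr (Rn @^-1` [set r | u + (b - a) <= r]).
  rewrite -(iXR _ _ (measurable_le_ray a) (measurable_ge_ray (u + (b - a)))).
  rewrite -(iXY _ _ (measurable_le_ray a) (measurable_ge_ray (u + b))).
  apply: pr_le; [apply: measurableI => //; exact: mY (measurable_ge_ray _)|
                 apply: measurableI => //; exact: mR (measurable_ge_ray _)|].
  by move=> x /= [hx hr]; split => //; rewrite /Y in hr; lra.
rewrite ler_pM2l // in h1; rewrite ler_pM2l // in h2.
exact: le_trans h1 h2.
Qed.

Section Dichotomy.
Variable X : T -> R.
Hypothesis mX : rv_meas (@measurable _ R) X.
Hypothesis tail_dichotomy : forall a b, a < b ->
  pr (X @^-1` [set r | r <= a]) = 0 \/ pr (X @^-1` [set r | b < r]) = 0.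

Let null_lower := [set a : R | pr (X @^-1` [set r | r <= a]) = 0].

Let null_lower_le a s : null_lower s -> a <= s -> null_lower a.
Proof.
move=> Ss las; apply: (pr_le_eq0 _ _ _ Ss); [exact: mX (measurable_le_ray _)|
  exact: mX (measurable_le_ray _)|].
by move=> x /= h; apply: le_trans las.
Qed.

Let prT_neq0 : pr setT <> 0.
Proof. by rewrite prT; apply/eqP; rewrite oner_eq0. Qed.

Let has_sup_null_lower : has_sup null_lower.
Proof.
split.
  apply: contra_notP prT_neq0 => nS.
  have hb b : pr (X @^-1` [set r | b < r]) = 0.
    have lb : b - 1 < b by lra.
    have [h|//] := tail_dichotomy lb; exfalso; apply: nS.
    by exists (b - 1).
  apply: (@pr_cover_null _ _ _ P _ (fun k : nat => X @^-1` [set r | - (k%:R) < r])) => //.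
  - by move=> k; exact: mX (measurable_gt_ray _).
  - move=> x _; have [k hk] := exists_nat_gt (- X x); exists k => //=; lra.
apply: contra_notP prT_neq0 => nub.
have hall a : null_lower a.
  apply: contra_notP nub => nSa; exists a => s Ss.
  rewrite leNgt; apply/negP => as_; apply: nSa; apply: null_lower_le Ss _; exact: ltW.
apply: (@pr_cover_null _ _ _ P _ (fun k : nat => X @^-1` [set r | r <= k%:R])) => //.
- by move=> k; exact: mX (measurable_le_ray _).
- by move=> k; apply: hall.
- move=> x _; have [k hk] := exists_nat_gt (X x); exists k => //=; exact: ltW.
Qed.

Lemma dichotomy_as_constant :
  exists c, pr (X @^-1` [set r | r < c]) = 0 /\ pr (X @^-1` [set r | c < r]) = 0.
Proof.
exists (sup null_lower); split.
- apply: (@pr_cover_null _ _ _ P _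
    (fun k : nat => X @^-1` [set r | r <= sup null_lower - (k.+1%:R)^-1])).
  + exact: mX (measurable_lt_ray _).
  + by move=> k; exact: mX (measurable_le_ray _).
  + move=> k; have [s Ss hs] := @sup_adherent R null_lower (k.+1%:R)^-1
      ltac:(by rewrite invr_gt0) has_sup_null_lower.
    by apply: null_lower_le Ss _; exact: ltW.
  + move=> x /= hx.
    have [k hk] := exists_invS_lt (ltac:(by rewrite subr_gt0) : 0 < sup null_lower - X x).
    by exists k => //=; rewrite lerBrDr addrC -lerBrDr; exact: ltW.
- apply: (@pr_cover_null _ _ _ P _
    (fun k : nat => X @^-1` [set r | sup null_lower + (k.+1%:R)^-1 < r])).
  + exact: mX (measurable_gt_ray _).
  + by move=> k; exact: mX (measurable_gt_ray _).
  + move=> k; have lt12 : sup null_lower + (k.+2%:R)^-1 < sup null_lower + (k.+1%:R)^-1.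
      by rewrite ltrD2l ltf_pV2 ?posrE ?ltr0n // ltr_nat; exact: ltnSn.
    have [h|//] := tail_dichotomy lt12; exfalso.
    have : sup null_lower + (k.+2%:R)^-1 <= sup null_lower.
      by apply: sup_upper_bound.
    by rewrite gerDl leNgt invr_gt0 ltr0n.
  + move=> x /= hx.
    have [k hk] := exists_invS_lt (ltac:(by rewrite subr_gt0) : 0 < X x - sup null_lower).
    by exists k => //=; rewrite -ltrBrDl.
Qed.

Lemma dichotomy_pr01 B : measurable B -> pr (X @^-1` B) = 0 \/ pr (X @^-1` B) = 1.
Proof.
move=> mB; have [c [h1 h2]] := dichotomy_as_constant.
have mN : measurable (X @^-1` (~` [set c])).
  by apply: mX; apply: measurableC; exact: measurable_set1.
have N0 : pr (X @^-1` (~` [set c])) = 0.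
  apply/eqP; rewrite eq_le pr_ge0 // andbT.
  have := pr_setU_le P (mX (measurable_lt_ray c)) (mX (measurable_gt_ray c)).
  rewrite h1 h2 addr0; apply: le_trans.
  apply: pr_le => //.
    by apply: measurableU; [exact: mX (measurable_lt_ray _)|exact: mX (measurable_gt_ray _)].
  by move=> x /= hx; have [] := ltgtP (X x) c; [left|right|].
have mXB := mX mB.
have [Bc|nBc] := pselect (B c); [right|left].
  have : pr (~` (X @^-1` B)) = 0.
    apply: (pr_le_eq0 (measurableC mXB) mN _ N0).
    by move=> x /= hx e; apply: hx; rewrite e.
  rewrite prC //; lra.
apply: (pr_le_eq0 mXB mN _ N0).
by move=> x /= hx e; apply: nBc; rewrite -e.
Qed.

End Dichotomy.

End AlmostSurelyConstant.

Section SigmaAlgebras.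
Context {R : realType} {d : measure_display} {T : measurableType d}
  (P : probability T R).

Lemma mutually_indep_all {V : Type} (mV : set (set V)) {I : finType} (Z : I -> T -> V)
  (B : I -> set V) : mutually_indep P mV Z -> (forall i, mV (B i)) ->
  pr P (fun w => forall i, B i (Z i w)) = \prod_i pr P (Z i @^-1` B i).
Proof.
move=> h hB; have := h [set: I]%SET B hB.
have -> : \bigcap_(i in [set i | i \in [set: I]%SET]) Z i @^-1` B i =
          (fun w => forall i, B i (Z i w)).
  by apply/seteqP; split=> x /= hx i; [apply: hx; rewrite /= finset.in_setT|move=> _; apply: hx].
rewrite /pr => ->; apply: eq_bigl => i; by rewrite finset.in_setT.
Qed.

Lemma mutually_indep_pair {V : Type} (mV : set (set V)) {I : finType} (Z : I -> T -> V)
  (i j : I) (B C : set V) : mutually_indep P mV Z -> mV setT -> i != j -> mV B -> mV C ->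
  pr P (Z i @^-1` B `&` Z j @^-1` C) = pr P (Z i @^-1` B) * pr P (Z j @^-1` C).
Proof.
move=> h mT ij mB mC.
pose Bk k := if k == i then B else if k == j then C else setT.
have hB k : mV (Bk k) by rewrite /Bk; case: ifP => _ //; case: ifP.
have := mutually_indep_all h hB.
have -> : (fun w => forall k, Bk k (Z k w)) = Z i @^-1` B `&` Z j @^-1` C.
  apply/seteqP; split=> x /= hx.
    split; first by have := hx i; rewrite /Bk eqxx.
    by have := hx j; rewrite /Bk eqxx eq_sym (negbTE ij).
  move=> k; rewrite /Bk; case: eqP => [->|_]; first by case: hx.
  by case: eqP => [->|_]; [case: hx|].
move=> ->; rewrite (bigD1 i) //= (bigD1 j) /=; last by rewrite eq_sym.
rewrite big1 ?mulr1 /Bk ?eqxx ?(negbTE (eqP ij)) //; last first.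
  by move=> k /andP[/negbTE -> /negbTE ->]; rewrite preimage_setT prT.
by rewrite eq_sym (negbTE ij).
Qed.

Lemma rv_measP (f : T -> R) : rv_meas (@measurable _ R) f <-> measurable_fun setT f.
Proof.
split=> h; first by move=> _ B mB; rewrite setTI; apply: h.
by move=> B mB; have := h measurableT B mB; rewrite setTI.
Qed.

Lemma sigmaRV_measurable {V} (mV : set (set V)) (f : T -> V) :
  rv_meas mV f -> forall S, sigmaRV mV f S -> measurable S.
Proof. by move=> mf S [B mB <-]; apply: mf. Qed.

Lemma sigmaRV_setT {V} (mV : set (set V)) (f : T -> V) : mV setT -> sigmaRV mV f setT.
Proof. by move=> h; exists setT => //; rewrite preimage_setT. Qed.

Lemma sigmaFam_measurable {V I} (mV : set (set V)) (Z : I -> T -> V) :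
  (forall i, rv_meas mV (Z i)) -> forall S, sigmaFam mV Z S -> measurable S.
Proof.
move=> h; apply: smallest_sub; first exact: sigma_algebra_measurable.
move=> S [i _ hS]; exact: sigmaRV_measurable hS.
Qed.

Lemma sigmaFam_setT {V I} (mV : set (set V)) (Z : I -> T -> V) : sigmaFam mV Z setT.
Proof.
rewrite /sigmaFam /smallest => X /= [[X0 XC _] _].
by have := XC set0 X0; rewrite setD0.
Qed.

End SigmaAlgebras.

Section RealCase.
Context {R : realType} {d : measure_display} {T : measurableType d}
  (P : probability T R).

Local Notation borel := (@measurable _ R).

Lemma MI_eq0_of_indep_shift (X Rn : T -> R) (G : set (set T)) :
  rv_meas borel X -> rv_meas borel Rn ->
  (forall B C, measurable B -> measurable C ->
    pr P (X @^-1` B `&` Rn @^-1` C) = pr P (X @^-1` B) * pr P (Rn @^-1` C)) ->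
  MI P (sigmaRV borel X) (sigmaRV borel (fun w => X w + Rn w)) = 0%E ->
  (forall S, G S -> measurable S) -> G setT ->
  MI P (sigmaRV borel X) G = 0%E.
Proof.
move=> mX mRn iXR hMI mG GT.
have mY : rv_meas borel (fun w => X w + Rn w).
  by apply/rv_measP; apply: measurable_realfun.measurable_funD; apply/rv_measP.
have iXY B C : measurable B -> measurable C ->
    pr P (X @^-1` B `&` (fun w => X w + Rn w) @^-1` C) =
    pr P (X @^-1` B) * pr P ((fun w => X w + Rn w) @^-1` C).
  move=> mB mC; apply: (MI_eq0_indep hMI).
  - exact: sigmaRV_measurable.
  - exact: sigmaRV_measurable.
  - by exists B.
  - by exists (~` B) => //; exact: measurableC.
  - by exists C.
  - by exists (~` C) => //; exact: measurableC.
apply: MI_trivial_eq0 => //; last exact: sigmaRV_setT.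
move=> S [B mB <-]; split; first exact: mX.
apply: (dichotomy_pr01 mX _ mB) => a b ab.
exact: (indep_shift_tail_dichotomy mX mRn mY iXR iXY ab).
Qed.

Lemma real_case (n : nat) (X Rn : 'I_n -> T -> R) :
  (forall i, rv_meas borel (X i)) -> (forall i, rv_meas borel (Rn i)) ->
  mutually_indep P borel
    (fun k : 'I_n + 'I_n => match k with inl i => X i | inr i => Rn i end) ->
  (forall i, MI P (sigmaRV borel (X i)) (sigmaRV borel (fun w => X i w + Rn i w)) = 0%E) ->
  forall i,
    MI P (sigmaRV borel (X i))
      (sigmaFam borel (fun o : option 'I_n => match o with
         | Some j => fun w => X j w + Rn j w
         | None => fun w => \sum_(j < n) Rn j w end))
    = MI P (sigmaRV borel (X i)) (sigmaRV borel (fun w => \sum_(j < n) X j w)).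
Proof.
move=> mX mRn hind hMI i.
have iXR B C : measurable B -> measurable C ->
    pr P (X i @^-1` B `&` Rn i @^-1` C) = pr P (X i @^-1` B) * pr P (Rn i @^-1` C).
  by move=> mB mC; exact: (mutually_indep_pair (i := inl i) (j := inr i) hind measurableT).
rewrite !(MI_eq0_of_indep_shift (mX i) (mRn i) iXR (hMI i)) //.
- apply: sigmaRV_measurable.
  by apply/rv_measP; apply: measurable_sum => j; apply/rv_measP.
- exact: sigmaRV_setT.
- apply: sigmaFam_measurable; case=> [j|] /=; last first.
    by apply/rv_measP; apply: measurable_sum => j; apply/rv_measP.
  by apply/rv_measP; apply: measurable_realfun.measurable_funD; apply/rv_measP.
- exact: sigmaFam_setT.
Qed.

End RealCase.

Section FiniteGroupCase.
Context {R : realType} {d : measure_display} {T : measurableType d}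
  (P : probability T R) (V : finZmodType) (n : nat) (X Rn : 'I_n -> T -> V).
Hypothesis mX : forall i, rv_meas [set: set V] (X i).
Hypothesis mR : forall i, rv_meas [set: set V] (Rn i).
Hypothesis hind : mutually_indep P [set: set V]
  (fun k : 'I_n + 'I_n => match k with inl i => X i | inr i => Rn i end).
Hypothesis hMI : forall i, MI P (sigmaRV [set: set V] (X i))
  (sigmaRV [set: set V] (fun w => X i w + Rn i w)) = 0%E.

Local Notation pr := (pr P).
Local Notation XR := (fun k : 'I_n + 'I_n => match k with inl i => X i | inr i => Rn i end).

Definition Vals := ({ffun 'I_n -> V} * {ffun 'I_n -> V})%type.
Definition vals (w : T) : Vals := ([ffun j => X j w], [ffun j => Rn j w]).

Lemma measurable_vals1 (v : Vals) : measurable (vals @^-1` [set v]).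
Proof.
have -> : vals @^-1` [set v] = \bigcap_(k in [set: 'I_n + 'I_n])
    XR k @^-1` [set match k with inl j => v.1 j | inr j => v.2 j end].
  apply/seteqP; split=> w /=.
    by move=> <- [j|j] _ /=; rewrite ffunE.
  move=> h; case: v h => v1 v2 h; congr pair; apply/ffunP => j; rewrite ffunE.
    exact: (h (inl j)).
  exact: (h (inr j)).
apply: fin_bigcap_measurable; first exact: finite_finset.
by move=> [j|j] _; [apply: mX|apply: mR].
Qed.

Lemma measurable_factor_vals (U : finType) (g : T -> U) (h : Vals -> U) :
  (forall w, g w = h (vals w)) -> forall C, measurable (g @^-1` C).
Proof.
move=> e C.
have -> : g @^-1` C = \bigcup_(v in [set v | C (h v)]) vals @^-1` [set v].
  apply/seteqP; split=> w /=; first by move=> hw; exists (vals w) => //=; rewrite -e.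
  by move=> [v hv ev]; rewrite e ev.
apply: fin_bigcup_measurable; first exact: finite_finset.
by move=> v _; apply: measurable_vals1.
Qed.

Lemma measurable_sumY (j : 'I_n) C : measurable ((fun w => X j w + Rn j w) @^-1` C).
Proof. by apply: (measurable_factor_vals (h := fun v => v.1 j + v.2 j)) => w; rewrite !ffunE. Qed.

Definition pvals (v : Vals) := pr (vals @^-1` [set v]).
Definition pX j x := pr (X j @^-1` [set x]).
Definition pR j r := pr (Rn j @^-1` [set r]).
Definition pY j y := pr ((fun w => X j w + Rn j w) @^-1` [set y]).

Lemma pvalsE v : pvals v = \prod_j (pX j (v.1 j) * pR j (v.2 j)).
Proof.
pose B k := [set match k with inl j => v.1 j | inr j => v.2 j end].
have := mutually_indep_all hind (B := B) (fun _ => I).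
have -> : (fun w => forall k, B k (XR k w)) = vals @^-1` [set v].
  apply/seteqP; split=> w /=.
    move=> h; rewrite /B {B} in h; case: v h => v1 v2 h; congr pair.
      by apply/ffunP => j; rewrite ffunE; exact: (h (inl j)).
    by apply/ffunP => j; rewrite ffunE; exact: (h (inr j)).
  by move=> ev k; rewrite /B -ev; case: k => j /=; rewrite ffunE.
by rewrite /pvals => ->; rewrite big_sumType /= big_split.
Qed.

Lemma pr_vals (D : pred Vals) : pr (vals @^-1` [set v | D v]) = \sum_(v | D v) pvals v.
Proof.
have := pr_preimage_pred P D measurableT measurable_vals1.
by rewrite setTI => ->; apply: eq_bigr => v _; rewrite setTI.
Qed.

Lemma sum_pR j : \sum_r pR j r = 1.
Proof. by apply: sum_pr_fibers => u; exact: mR. Qed.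

Lemma sum_pY j : \sum_y pY j y = 1.
Proof. by apply: sum_pr_fibers => u; exact: measurable_sumY. Qed.

(* the only use of [I(X_j; X_j + R_j) = 0]: on the support of [X_j],
   the law of [R_j] is that of [X_j + R_j] shifted by [-x] *)
Lemma pX_pR_pY j x y : pX j x * pR j (y - x) = pX j x * pY j y.
Proof.
have e1 := MI_eq0_indep (hMI j) (sigmaRV_measurable (mX j))
  (sigmaRV_measurable (fun B _ => measurable_sumY j B))
  (A := X j @^-1` [set x]) (C := (fun w => X j w + Rn j w) @^-1` [set y]).
have e2 := mutually_indep_pair (i := inl j) (j := inr j) (B := [set x]) (C := [set y - x])
  hind I isT I I.
rewrite /pX /pR /pY -e1; [rewrite /= in e2; rewrite -e2| by exists [set x]|
  by exists (~` [set x])|by exists [set y]|by exists (~` [set y])].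
congr pr; apply/seteqP; split=> w /= [hx hy]; split => //.
  by rewrite hx hy addrC subrK.
by rewrite -hy hx addrAC subrr add0r.
Qed.

Definition Obs := ({ffun 'I_n -> V} * V)%type.
Definition obs (w : T) : Obs := ([ffun j => X j w + Rn j w], \sum_(j < n) Rn j w).
Definition obs_of_vals (v : Vals) : Obs := ([ffun j => v.1 j + v.2 j], \sum_(j < n) v.2 j).
Definition sumX (w : T) : V := \sum_(j < n) X j w.
Definition pYs (y : {ffun 'I_n -> V}) : R := \prod_j pY j (y j).

Lemma obsE w : obs w = obs_of_vals (vals w).
Proof.
rewrite /obs /obs_of_vals /vals /=; congr pair.
  by apply/ffunP => j; rewrite !ffunE.
by apply: eq_bigr => j _; rewrite ffunE.
Qed.

Lemma sumXE w : sumX w = \sum_(j < n) (vals w).1 j.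
Proof. by apply: eq_bigr => j _; rewrite ffunE. Qed.

Lemma measurable_obs C : measurable (obs @^-1` C).
Proof. by apply: (measurable_factor_vals (h := obs_of_vals)) => w; rewrite obsE. Qed.

Lemma sum_pYs : \sum_y pYs y = 1.
Proof.
by rewrite /pYs -(bigA_distr_bigA (fun j t => pY j t)) big1 // => j _; exact: sum_pY.
Qed.

Lemma sum_pvals_obs (E0 : set V) (i : 'I_n) (x y : {ffun 'I_n -> V}) (r : V) :
  \sum_(rr : {ffun 'I_n -> V})
     (if `[< E0 (x i) >] && (obs_of_vals (x, rr) == (y, r)) then pvals (x, rr) else 0) =
  if `[< E0 (x i) >] && (\sum_j x j == \sum_j y j - r)
  then (\prod_j pX j (x j)) * pYs y else 0.
Proof.
set r0 : {ffun 'I_n -> V} := [ffun j => y j - x j].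
rewrite (bigD1 r0) //= big1 ?addr0; last first.
  move=> rr /negbTE nr; case: ifP => // /andP[_ /eqP].
  rewrite /obs_of_vals /= => -[/ffunP hy _]; move: nr; rewrite /r0.
  suff -> : rr = [ffun j => y j - x j] by rewrite eqxx.
  by apply/ffunP => j; rewrite ffunE -hy ffunE addrC addKr.
have hW : [ffun j => x j + r0 j] = y by apply/ffunP => j; rewrite !ffunE addrC subrK.
have hS : \sum_j r0 j = \sum_j y j - \sum_j x j.
  by rewrite -sumrB; apply: eq_bigr => j _; rewrite ffunE.
rewrite /obs_of_vals /= hW hS xpair_eqE eqxx /=.
have -> : (\sum_j y j - \sum_j x j == r) = (\sum_j x j == \sum_j y j - r).
  by rewrite subr_eq [in RHS]eq_sym subr_eq addrC.
case: ifP => // _; rewrite pvalsE /pYs -big_split /=; apply: eq_bigr => j _.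
by rewrite /= ffunE pX_pR_pY.
Qed.

Lemma sum_pvals_snd (x : {ffun 'I_n -> V}) :
  \sum_(rr : {ffun 'I_n -> V}) pvals (x, rr) = \prod_j pX j (x j).
Proof.
transitivity (\sum_(rr : {ffun 'I_n -> V}) (\prod_j pX j (x j)) * \prod_j pR j (rr j)).
  by apply: eq_bigr => rr _; rewrite pvalsE big_split.
rewrite -mulr_sumr -(bigA_distr_bigA (fun j t => pR j t)).
by rewrite [X in _ * X]big1 ?mulr1 // => j _; exact: sum_pR.
Qed.

Lemma pr_obs1 (i : 'I_n) (E0 : set V) (y : {ffun 'I_n -> V}) (r : V) :
  pr (X i @^-1` E0 `&` obs @^-1` [set (y, r)]) =
  pYs y * pr (X i @^-1` E0 `&` sumX @^-1` [set \sum_j y j - r]).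
Proof.
have e1 : X i @^-1` E0 `&` obs @^-1` [set (y, r)] =
    vals @^-1` [set v : Vals | `[< E0 (v.1 i) >] && (obs_of_vals v == (y, r))].
  apply/seteqP; split=> w /=; rewrite obsE.
    by move=> [h1 h2]; apply/andP; split; [apply/asboolP; rewrite /vals /= ffunE|rewrite h2].
  by move=> /andP[/asboolP h1 /eqP h2]; split => //; move: h1; rewrite /vals /= ffunE.
have e2 : X i @^-1` E0 `&` sumX @^-1` [set \sum_j y j - r] =
    vals @^-1` [set v : Vals | `[< E0 (v.1 i) >] && (\sum_j v.1 j == \sum_j y j - r)].
  apply/seteqP; split=> w /=; rewrite sumXE.
    by move=> [h1 h2]; apply/andP; split; [apply/asboolP; rewrite /vals /= ffunE|rewrite h2].
  by move=> /andP[/asboolP h1 /eqP h2]; split => //; move: h1; rewrite /vals /= ffunE.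
have sum_pairs (D : pred Vals) : \sum_(v | D v) pvals v =
    \sum_x \sum_rr (if D (x, rr) then pvals (x, rr) else 0).
  by rewrite pair_bigA /= big_mkcond; apply: eq_bigr => -[].
rewrite e1 e2 !pr_vals !sum_pairs mulr_sumr; apply: eq_bigr => x _.
rewrite sum_pvals_obs /=.
case: ifP => hc; last by rewrite big1 ?mulr0 // => rr _; rewrite hc.
by rewrite mulrC sum_pvals_snd.
Qed.


Local Notation Z := (fun o : option 'I_n => match o with
  | Some j => fun w => X j w + Rn j w
  | None => fun w => \sum_(j < n) Rn j w end).

Lemma sigmaFam_sub_sigma_obs : sigmaFam [set: set V] Z `<=` sigmaRV [set: set Obs] obs.
Proof.
move=> S hS; apply: (smallest_sub _ _ hS).
  split.
  - by exists set0; rewrite ?preimage_set0.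
  - move=> A [C _ <-]; exists (~` C) => //.
    by apply/seteqP; split=> w /=; by [case|].
  - move=> F hF; have [f hf] := choice (fun k => match hF k with
      ex_intro2 C _ e => ex_intro (fun C => obs @^-1` C = F k) C e end).
    exists (\bigcup_k f k) => //; apply/seteqP; split=> w /=.
      by move=> [k _ h]; exists k => //; rewrite -hf.
    by move=> [k _]; rewrite -hf => h; exists k.
move=> A0 []; case=> [j|] _ [B _ <-] /=.
  by exists [set w : Obs | B (w.1 j)] => //; apply/seteqP; split=> w /=; rewrite ffunE.
by exists [set w : Obs | B w.2].
Qed.

Lemma sumX_obs w : sumX w = \sum_j (obs w).1 j - (obs w).2.
Proof.
rewrite /obs /=; under eq_bigr do rewrite ffunE.
by rewrite big_split /= addrK.
Qed.

Lemma sigma_sumX_sub_sigmaFam : sigmaRV [set: set V] sumX `<=` sigmaFam [set: set V] Z.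
Proof.
move=> S [B _ <-].
set G0 := \bigcup_(i in [set: option 'I_n]) sigmaRV [set: set V] (Z i).
suff : (G0.-sigma).-measurable (sumX @^-1` B : set (g_sigma_algebraType G0)) by [].
have -> : sumX @^-1` B =
    \bigcup_(w in [set w : Obs | B (\sum_j w.1 j - w.2)]) obs @^-1` [set w].
  apply/seteqP; split=> t /=; first by move=> h; exists (obs t) => //=; rewrite -sumX_obs.
  by move=> [w hw ht]; rewrite sumX_obs ht.
apply: fin_bigcup_measurable; first exact: finite_finset.
move=> [y r] _.
have -> : obs @^-1` [set (y, r)] = \bigcap_(o in [set: option 'I_n])
    Z o @^-1` [set match o with Some j => y j | None => r end].
  apply/seteqP; split=> t /=.
    by move=> [<- <-] [j|] _ /=; rewrite ?ffunE.
  move=> h; congr pair; last exact: (h None).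
  by apply/ffunP => j; rewrite ffunE; exact: (h (Some j)).
apply: fin_bigcap_measurable; first exact: finite_finset.
move=> o _; apply: sub_gen_smallest; exists o => //.
by exists [set match o with Some j => y j | None => r end].
Qed.

Lemma fibers_obs_mi (i : 'I_n) (E0 : set V) :
  \sum_w mi_term (pr (X i @^-1` E0 `&` obs @^-1` [set w])) (pr (X i @^-1` E0))
                 (pr (obs @^-1` [set w])) =
  \sum_s mi_term (pr (X i @^-1` E0 `&` sumX @^-1` [set s])) (pr (X i @^-1` E0))
                 (pr (sumX @^-1` [set s])).
Proof.
set A := X i @^-1` E0.
set h := fun s => mi_term (pr (A `&` sumX @^-1` [set s])) (pr A) (pr (sumX @^-1` [set s])).
have hg y r : mi_term (pr (A `&` obs @^-1` [set (y, r)])) (pr A) (pr (obs @^-1` [set (y, r)]))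
    = pYs y * h (\sum_j y j - r).
  have eb : pr (obs @^-1` [set (y, r)]) = pYs y * pr (sumX @^-1` [set \sum_j y j - r]).
    by have := pr_obs1 i setT y r; rewrite preimage_setT !setTI.
  rewrite eb /A pr_obs1 mi_termZ //.
  by apply: prodr_ge0 => j _; apply: pr_ge0; exact: measurable_sumY.
rewrite (eq_bigr (fun w => mi_term (pr (A `&` obs @^-1` [set (w.1, w.2)])) (pr A)
  (pr (obs @^-1` [set (w.1, w.2)])))); last by move=> -[].
rewrite -(pair_bigA _ (fun y r => mi_term (pr (A `&` obs @^-1` [set (y, r)])) (pr A)
  (pr (obs @^-1` [set (y, r)])))) /=.
under eq_bigr do under eq_bigr do rewrite hg.
have -> : \sum_y \sum_r pYs y * h (\sum_j y j - r) = \sum_y pYs y * \sum_s h s.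
  apply: eq_bigr => y _; rewrite -mulr_sumr; congr (_ * _).
  rewrite [RHS](reindex_inj (h := fun r => \sum_j y j - r)) //.
  by move=> u v huv; rewrite -(opprK u) -(opprK v); congr (- _); apply: (addrI (\sum_j y j)).
by rewrite -mulr_suml sum_pYs mul1r.
Qed.

Lemma fpartition_fibers_sumX :
  fpartition (sigmaRV [set: set V] sumX) (fun k : 'I_#|V| => sumX @^-1` [set enum_val k]).
Proof.
split; [|split].
- by move=> k; exists [set enum_val k].
- move=> k l kl; apply/seteqP; split=> w //= [h1 h2].
  by move: kl; rewrite (enum_val_inj (etrans (esym h1) h2)) eqxx.
- apply/seteqP; split=> w // _; exists (enum_rank (sumX w)) => //=.
  by rewrite enum_rankK.
Qed.

Lemma finite_group_case (i : 'I_n) :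
  MI P (sigmaRV [set: set V] (X i)) (sigmaFam [set: set V] Z) =
  MI P (sigmaRV [set: set V] (X i)) (sigmaRV [set: set V] sumX).
Proof.
apply/eqP; rewrite eq_le; apply/andP; split; last by apply: le_MI; exact: sigma_sumX_sub_sigmaFam.
apply: ge_ereal_sup => _ [m [m' [A [B [hA [hB hBdis] ->]]]]].
apply: (le_trans _ (partition_mi_le_MI P hA fpartition_fibers_sumX)); rewrite lee_fin.
apply: ler_sum => k _; have [E0 _ <-] := hA.1 k.
set F := fun s => mi_term (pr (X i @^-1` E0 `&` sumX @^-1` [set s])) (pr (X i @^-1` E0))
  (pr (sumX @^-1` [set s])).
rewrite (eq_bigr (fun l => F (enum_val l))) // -(big_enum_val (A := predT) F).
rewrite (eq_bigl xpredT) // /F -fibers_obs_mi.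
apply: partition_mi_le_fibers; [exact: mX|move=> w; exact: measurable_obs|].
by split => // l; apply: sigmaFam_sub_sigma_obs.
Qed.

End FiniteGroupCase.

Unset Implicit Arguments. Set Strict Implicit.

Theorem mainTheorem4 (R : realType) (d : measure_display) (T : measurableType d)
  (P : probability T R) (n : nat) :
  (forall (X Rn : 'I_n -> T -> R),
     (forall i, rv_meas (@measurable _ R) (X i)) ->
     (forall i, rv_meas (@measurable _ R) (Rn i)) ->
     mutually_indep P (@measurable _ R)
       (fun k : 'I_n + 'I_n => match k with inl i => X i | inr i => Rn i end) ->
     (forall i, MI P (sigmaRV (@measurable _ R) (X i))
                     (sigmaRV (@measurable _ R) (fun w => X i w + Rn i w)) = 0%E) ->
     forall i,
       MI P (sigmaRV (@measurable _ R) (X i))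
            (sigmaFam (@measurable _ R)
               (fun o : option 'I_n => match o with
                  | Some j => fun w => X j w + Rn j w
                  | None => fun w => \sum_(j < n) Rn j w end))
       = MI P (sigmaRV (@measurable _ R) (X i))
              (sigmaRV (@measurable _ R) (fun w => \sum_(j < n) X j w)))
  /\
  (forall (p : nat), (1 < p)%N ->
   forall (X Rn : 'I_n -> T -> 'Z_p),
     (forall i, rv_meas [set: set 'Z_p] (X i)) ->
     (forall i, rv_meas [set: set 'Z_p] (Rn i)) ->
     mutually_indep P [set: set 'Z_p]
       (fun k : 'I_n + 'I_n => match k with inl i => X i | inr i => Rn i end) ->
     (forall i, MI P (sigmaRV [set: set 'Z_p] (X i))
                     (sigmaRV [set: set 'Z_p] (fun w => X i w + Rn i w)) = 0%E) ->
     forall i,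
       MI P (sigmaRV [set: set 'Z_p] (X i))
            (sigmaFam [set: set 'Z_p]
               (fun o : option 'I_n => match o with
                  | Some j => fun w => X j w + Rn j w
                  | None => fun w => \sum_(j < n) Rn j w end))
       = MI P (sigmaRV [set: set 'Z_p] (X i))
              (sigmaRV [set: set 'Z_p] (fun w => \sum_(j < n) X j w))).
Proof.
split; first exact: real_case.
(* ['Z_p] is a finite abelian group for every [p]; [1 < p] only makes it Z/pZ *)
move=> p _ X Rn mX mRn hind hMI i.
exact: (finite_group_case mX mRn hind hMI i).
Qed.
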